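(* Let $G$ be an edge-coloured multigraph, $t \ge 5$, $M$ a rainbow matching of maximum size in $G$, $C_0$ the set of colours not used on $M$, and $N$ a $t$-auxiliary matching for $M$. Then (i) there is no $(C_0 \cup C_N)$-coloured edge vertex-disjoint from the matching $N \cup (M\setminus M_N)$, and (ii) there is no $(C_0\cup C_N)$-rainbow horn in the matching $N \cup (M \setminus M_N)$.
   Context: A rainbow matching is a matching whose edges have pairwise distinct colours; an edge is $C$-coloured if its colour lies in $C$. Let $V$ be the vertex set of $G$. For a rainbow matching $M$ with unused colour set $C_0$, a $t$-auxiliary matching for $M$ is a matching $N$ each of whose edges has one endpoint in $V\setminus V(M)$ and the other in $V(M)$, such that for each edge of $N$ its pair of endpoints is joined by edges of at least $t$ distinct colours from $C_0$, and no two edges of $N$ intersect the same edge of $M$. $M_N \subseteq M$ is the set of edges of $M$ intersecting an edge of $N$, and $C_N$ is the set of colours of the edges of $M_N$. For a matching $L$, a $C$-rainbow horn in $L$ is an edge $e\in L$ such that there exist two vertex-disjoint edges $e_1,e_2$, each with one endpoint in $e$ and the other in $V\setminus V(L)$, of two distinct colours $c_1,c_2\in C$. *)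

From mathcomp Require Import all_boot.
Set Implicit Arguments. Unset Strict Implicit. Unset Printing Implicit Defensive.

Section RainbowDefs.
Variables (V C E : finType) (src dst : E -> V) (col : E -> C).

Definition vset (e : E) : {set V} := [set src e; dst e].

Definition loopless : Prop := forall e, src e != dst e.

Definition is_matching (M : {set E}) : Prop :=
  forall e f, e \in M -> f \in M -> e != f -> [disjoint vset e & vset f].

Definition rainbow (M : {set E}) : Prop := {in M &, injective col}.

Definition rainbow_matching (M : {set E}) : Prop := is_matching M /\ rainbow M.

Definition max_rainbow_matching (M : {set E}) : Prop :=
  rainbow_matching M /\ forall M', rainbow_matching M' -> #|M'| <= #|M|.

Definition vsetM (M : {set E}) : {set V} := \bigcup_(e in M) vset e.

Definition unused (M : {set E}) : {set C} := ~: (col @: M).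

Definition joining_cols (C0 : {set C}) (e : E) : {set C} :=
  [set c in C0 | [exists e' : E, (vset e' == vset e) && (col e' == c)]].

Definition t_auxiliary (t : nat) (M N : {set E}) : Prop :=
  [/\ is_matching N,
      forall e, e \in N ->
        ((src e \notin vsetM M) && (dst e \in vsetM M)) ||
        ((dst e \notin vsetM M) && (src e \in vsetM M)),
      forall e, e \in N -> t <= #|joining_cols (unused M) e|
    & forall f, f \in M -> #|[set e in N | ~~ [disjoint vset e & vset f]]| <= 1].

Definition MN (M N : {set E}) : {set E} :=
  [set f in M | [exists e in N, ~~ [disjoint vset e & vset f]]].

Definition CN (M N : {set E}) : {set C} := col @: MN M N.

Definition horn_edge (L : {set E}) (e e' : E) : Prop :=
  exists x y, vset e' = [set x; y] /\ x \in vset e /\ y \notin vsetM L.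

Definition rainbow_horn (Cs : {set C}) (L : {set E}) (e : E) : Prop :=
  e \in L /\ exists e1 e2 : E,
    [/\ [disjoint vset e1 & vset e2], horn_edge L e e1, horn_edge L e e2,
        col e1 != col e2 & (col e1 \in Cs) && (col e2 \in Cs)].

End RainbowDefs.

From mathcomp Require Import all_boot zify.
Set Implicit Arguments. Unset Strict Implicit. Unset Printing Implicit Defensive.

(* In both parts a forbidden configuration yields a rainbow matching larger
   than M. Let A be the new edges (the free edge, resp. the two horn edges)
   and D the edges of M meeting the horn's base edge (none in part (i)).
   The edges of M outside M_N and D lie in L and avoid A; the edges of M_N \ D
   clashing with A (the "blockers") number at most 4 minus the unused colours
   of A. Each blocker f meets a single edge of N, whose ends are joined by
   t >= 5 edges of unused colours, so f can be traded for a parallel edge of a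
   fresh unused colour avoiding A. Removing D and the blockers and adding the
   new edges gains |A| - |D| >= 1. *)

Section ColouredGraph.
Variables (V C E : finType) (src dst : E -> V) (col : E -> C).
Local Notation vs := (vset src dst).
Local Notation vM := (vsetM src dst).
Local Notation matching := (is_matching src dst).
Local Notation rmatching := (rainbow_matching src dst col).

Definition meets (e f : E) : bool := ~~ [disjoint vs e & vs f].

Definition compatible (e f : E) : bool :=
  [disjoint vs e & vs f] && (col e != col f).

Lemma meetsP e f : reflect (exists2 x, x \in vs e & x \in vs f) (meets e f).
Proof.
rewrite /meets -setI_eq0; apply: (iffP (set0Pn _)) => [[x /setIP[]] | [x xe xf]].
  by exists x.
by exists x; apply/setIP.
Qed.

Lemma meetsC e f : meets e f = meets f e.
Proof. by rewrite /meets disjoint_sym. Qed.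

Lemma in_vset x e : (x \in vs e) = (x == src e) || (x == dst e).
Proof. by rewrite !inE. Qed.

Lemma vset_sub_vsetM (L : {set E}) e : e \in L -> vs e \subset vM L.
Proof. exact: bigcup_sup. Qed.

Lemma compatible_neq e f : compatible e f -> e != f.
Proof. by apply: contraTneq => ->; rewrite /compatible eqxx andbF. Qed.

Lemma matching_meets (M : {set E}) e f :
  matching M -> e \in M -> f \in M -> meets e f -> e = f.
Proof. by move=> mM eM fM; apply: contraTeq => /(mM _ _ eM fM); rewrite /meets negbK. Qed.

Lemma matching_vset (M : {set E}) x e f :
  matching M -> e \in M -> f \in M -> x \in vs e -> x \in vs f -> e = f.
Proof.
by move=> mM eM fM xe xf; apply: (matching_meets mM eM fM); apply/meetsP; exists x.
Qed.

Lemma rainbow_matching1 e : rmatching [set e].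
Proof. by split=> [a b | a b]; rewrite !inE => /eqP -> /eqP ->; rewrite ?eqxx. Qed.

Lemma rainbow_matchingS (X Y : {set E}) : Y \subset X -> rmatching X -> rmatching Y.
Proof.
move=> /subsetP YX [mX rX]; split=> [a b /YX aX /YX bX | a b /YX aX /YX bX].
  exact: mX.
exact: rX.
Qed.

Lemma meets_endpoint f g : meets f g -> (src g \in vs f) || (dst g \in vs f).
Proof. by case/meetsP=> z zf /set2P[] <-; rewrite zf ?orbT. Qed.

Lemma horn_edge_meets e a x y h : vs a = [set x; y] -> x \in vs e ->
  meets h a -> meets h e || (y \in vs h).
Proof.
move=> va xe /meetsP[z zh]; rewrite va => /set2P[] zxy; subst z.
  by apply/orP; left; apply/meetsP; exists x.
by rewrite zh orbT.
Qed.

Lemma horn_meets (L : {set E}) e a h : horn_edge src dst L e a -> h \in L ->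
  meets h a -> meets h e.
Proof.
move=> [x [y [va [xe yL]]]] hL /(horn_edge_meets va xe) /orP[//|yh].
by case/negP: yL; apply: subsetP (vset_sub_vsetM hL) _ yh.
Qed.

Lemma col_notin_unused (M : {set E}) f : f \in M -> col f \notin unused col M.
Proof. by move=> fM; rewrite inE negbK imset_f. Qed.

Section Union.
Variables X Y : {set E}.
Hypothesis XY : {in X & Y, forall x y, compatible x y}.

Lemma rainbow_matchingU : rmatching X -> rmatching Y -> rmatching (X :|: Y).
Proof.
move=> [mX rX] [mY rY]; split=> a b; rewrite !inE.
- case/orP=> [aX|aY] /orP[bX|bY]; [exact: mX | | | exact: mY] => _.
    by case/andP: (XY aX bY).
  by rewrite disjoint_sym; case/andP: (XY bX aY).
- case/orP=> [aX|aY] /orP[bX|bY] cab; [exact: rX | | | exact: rY].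
    by case/andP: (XY aX bY); rewrite cab eqxx.
  by case/andP: (XY bX aY); rewrite cab eqxx.
Qed.

Lemma card_compatibleU : #|X :|: Y| = #|X| + #|Y|.
Proof.
apply/eqP; rewrite (leq_card_setU X Y).2 disjoint_subset.
apply/subsetP => x xX; rewrite inE; apply/negP => xY.
by case/negP: (compatible_neq (XY xX xY)).
Qed.

End Union.

Lemma rainbow_matching2 e f : compatible e f -> rmatching [set e; f].
Proof.
move=> cef; apply: rainbow_matchingU (rainbow_matching1 e) (rainbow_matching1 f).
by move=> a b /set1P-> /set1P->.
Qed.

Section Maximal.
Variable M : {set E}.
Hypothesis maxM : max_rainbow_matching src dst col M.

Lemma max_compatible_card (X Y : {set E}) : X \subset M -> rmatching Y ->
  {in M :\: X & Y, forall f y, compatible f y} -> #|Y| <= #|X|.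
Proof.
move=> XM rY MY; case: maxM => rM leM.
have rMX := rainbow_matchingS (subsetDl M X) rM.
have := leM _ (rainbow_matchingU MY rMX rY).
rewrite card_compatibleU // cardsD (setIidPr XM).
have := subset_leq_card XM; lia.
Qed.

End Maximal.

Section Counting.
Variable M : {set E}.
Hypothesis rmM : rmatching M.

Lemma card_edges_at z : #|[set f in M | z \in vs f]| <= 1.
Proof.
apply/card_le1_eqP => f f' /setIdP[fM zf] /setIdP[f'M zf'].
by case: rmM => mM _; apply: matching_vset mM f'M fM zf' zf.
Qed.

Lemma card_coloured (P : {set C}) :
  #|P :&: unused col M| + #|[set f in M | col f \in P]| <= #|P|.
Proof.
set F := [set f in M | col f \in P].
have injF : {in F &, injective col}.
  by case: rmM => _ rM f f' /setIdP[fM _] /setIdP[f'M _]; apply: rM.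
have colF : col @: F \subset P :\: unused col M.
  apply/subsetP => _ /imsetP[f /setIdP[fM fP] ->].
  by rewrite !inE fP negbK andbT; apply: imset_f.
by rewrite -(card_in_imset injF) -(cardsID (unused col M) P) leq_add2l subset_leq_card.
Qed.

End Counting.

Section AuxiliaryMatching.
Variables (t : nat) (M N : {set E}).
Hypotheses (maxM : max_rainbow_matching src dst col M)
  (auxN : t_auxiliary src dst col t M N).
Local Notation M_N := (MN src dst M N).
Local Notation C0 := (unused col M).

Let rmM : rmatching M. Proof. by case: maxM. Qed.
Let mN : matching N. Proof. by case: auxN. Qed.

Lemma MN_subset : M_N \subset M.
Proof. by apply/subsetP => f /setIdP[]. Qed.

Lemma N_meets_unique e f f' : e \in N -> f \in M -> f' \in M ->
  meets e f -> meets e f' -> f = f'.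
Proof.
move=> eN fM f'M /meetsP[x xe xf] /meetsP[x' xe' xf'].
have inVM g y : g \in M -> y \in vs g -> y \in vM M.
  by move=> gM; apply: subsetP (vset_sub_vsetM gM) y.
have xx' : x = x'.
  case: auxN => _ /(_ e eN) + _ _.
  move: xe xe' (inVM _ _ fM xf) (inVM _ _ f'M xf'); rewrite !in_vset.
  by case/orP=> /eqP-> /orP[]/eqP-> // -> ->.
by case: rmM => mM _; apply: matching_vset mM fM f'M xf _; rewrite xx'.
Qed.

Lemma meets_N_disjoint (s : seq E) e f : {subset s <= M} -> e \in N ->
  has (meets e) s -> f \in M -> f \notin s -> [disjoint vs e & vs f].
Proof.
move=> sM eN /hasP[f' f's mef'] fM; apply: contraNT => mef.
by rewrite (N_meets_unique eN fM (sM _ f's) mef mef').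
Qed.

Lemma replacement_edges (s : seq E) (K : {set C}) :
  uniq s -> {subset s <= M_N} -> #|K| + size s < t ->
  exists R : {set E}, [/\ #|R| = size s, rmatching R,
    {in R, forall r, col r \in C0 :\: K}
    & {in R, forall r, exists2 e, e \in N & (vs r == vs e) && has (meets e) s}].
Proof.
elim: s K => [|f s IH] K /=.
  move=> _ _ _; exists set0; split; rewrite ?cards0 //; try split;
  by move=> ?; rewrite inE.
move=> /andP[fs us] sub tK.
have [fMN sMN] : f \in M_N /\ {subset s <= M_N}.
  by split=> [|g gs]; apply: sub; rewrite inE ?eqxx ?gs ?orbT.
have sM : {subset s <= M} by move=> g /sMN; apply: subsetP MN_subset g.
have fM : f \in M by apply: subsetP MN_subset f fMN.
have [e eN mef] : exists2 e, e \in N & meets e f.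
  by case/setIdP: fMN => _ /existsP[e /andP[eN mef]]; exists e.
have [c cJ cK] : exists2 c, c \in joining_cols src dst col C0 e & c \notin K.
  apply/subsetPn; apply: contraTN tK => /subset_leq_card.
  by case: auxN => _ _ /(_ e eN) + _; rewrite -leqNgt; lia.
case/setIdP: cJ => cC0 /existsP[e' /andP[/eqP ve' /eqP ce']].
have tK' : #|c |: K| + size s < t by rewrite cardsU1 cK; lia.
have [R [cardR rR colR parR]] := IH _ us sMN tK'.
have e'R : e' \notin R by apply/negP => /colR; rewrite ce' !inE eqxx.
exists (e' |: R); split.
- by rewrite cardsU1 e'R cardR.
- apply: rainbow_matchingU (rainbow_matching1 e') rR.
  move=> _ r /set1P-> rR'; have [e2 e2N /andP[/eqP vr has2]] := parR r rR'.
  rewrite /compatible ve' vr ce'; apply/andP; split.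
    have [ee2|ne] := eqVneq e e2; last exact: mN eN e2N ne.
    by subst e2; move: mef; rewrite /meets (meets_N_disjoint sM eN has2 fM fs).
  by move: (colR r rR'); rewrite !inE negb_or eq_sym => /andP[/andP[]].
- move=> r /setU1P[->|/colR]; first by rewrite ce' inE cK cC0.
  by rewrite !inE negb_or => /andP[/andP[_ ->] ->].
- move=> r /setU1P[->|/parR[e2 e2N /andP[vr has2]]].
    by exists e; rewrite // ve' eqxx /= mef.
  by exists e2; rewrite // vr /= has2 orbT.
Qed.

Definition blockers (D A : {set E}) : {set E} :=
  [set f in M_N :\: D | [exists a in A, meets f a || (col f == col a)]].

Lemma no_augmentation (A D : {set E}) :
  rmatching A -> D \subset M -> #|D| < #|A| ->
  #|col @: A :&: C0| + #|blockers D A| < t ->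
  {in M :\: M_N :\: D & A, forall f a, compatible f a} ->
  {in N & A, forall e a,
    has (meets e) (enum (blockers D A)) -> [disjoint vs e & vs a]} ->
  False.
Proof.
move=> rA DM DA tS MA NA; set S := blockers D A.
have SMN : {subset enum S <= M_N} by move=> f; rewrite mem_enum => /setIdP[/setDP[]].
have SM : {subset enum S <= M} by move=> f /SMN; apply: subsetP MN_subset f.
have tS' : #|col @: A :&: C0| + size (enum S) < t by rewrite -cardE.
have [R [cardR rR colR parR]] := replacement_edges (enum_uniq S) SMN tS'.
have RA : {in R & A, forall r a, compatible r a}.
  move=> r a rR' aA; have [e eN /andP[/eqP vr hasS]] := parR r rR'.
  rewrite /compatible vr NA //=; apply: contraTneq (colR r rR') => ->.
  by rewrite !inE (imset_f col aA) /= andNb.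
have MRA : {in M :\: (D :|: S) & R :|: A, forall f y, compatible f y}.
  move=> f y /setDP[fM]; rewrite in_setU negb_or => /andP[fD fS] /setUP[yR|yA].
    have [e eN /andP[/eqP vy hasS]] := parR y yR.
    rewrite /compatible vy disjoint_sym (meets_N_disjoint SM eN hasS fM) ?mem_enum //=.
    by apply: contraNneq (col_notin_unused fM) => ->; case/setDP: (colR y yR).
  have [fMN|fMN] := boolP (f \in M_N); last by apply: MA; rewrite // !in_setD fMN fD.
  move: fS; rewrite inE in_setD fMN fD /= => /existsPn/(_ y).
  by rewrite yA negb_or /meets negbK.
have DSM : D :|: S \subset M.
  by rewrite subUset DM; apply/subsetP => f; rewrite -mem_enum => /SM.
have := max_compatible_card maxM DSM (rainbow_matchingU RA rR rA) MRA.
rewrite card_compatibleU // cardR -cardE.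
have := (leq_card_setU D S).1; lia.
Qed.

Lemma card_blockers (A D : {set E}) y1 y2 :
  {in M_N :\: D & A, forall f a, meets f a -> (y1 \in vs f) || (y2 \in vs f)} ->
  #|col @: A :&: C0| + #|blockers D A| <= 2 + #|col @: A|.
Proof.
move=> hY; set P := col @: A; pose at_y y := [set f in M | y \in vs f].
have : blockers D A \subset at_y y1 :|: at_y y2 :|: [set f in M | col f \in P].
  apply/subsetP => f /setIdP[fMD /existsP[a /andP[aA mcfa]]].
  have fM : f \in M by case/setDP: fMD => + _; apply: subsetP MN_subset f.
  case/orP: mcfa => [mfa|/eqP cfa]; apply/setUP; [left|right].
    by apply/setUP; case/orP: (hY f a fMD aA mfa) => yf; [left|right]; apply/setIdP.
  by apply/setIdP; rewrite cfa imset_f.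
move/subset_leq_card; have := card_coloured rmM P.
have : #|at_y y1| <= 1 := card_edges_at rmM y1.
have : #|at_y y2| <= 1 := card_edges_at rmM y2.
have := (leq_card_setU (at_y y1) (at_y y2)).1.
have := (leq_card_setU (at_y y1 :|: at_y y2) [set f in M | col f \in P]).1; lia.
Qed.

Local Notation Cs := (C0 :|: CN src dst col M N).

Lemma coloured_Cs_MN f : f \in M -> col f \in Cs -> f \in M_N.
Proof.
move=> fM; case/setUP=> [|/imsetP[f' f'MN cf]].
  by rewrite (negbTE (col_notin_unused fM)).
have f'M : f' \in M by apply: subsetP MN_subset f' f'MN.
by case: rmM => _ rM; rewrite (rM _ _ fM f'M cf).
Qed.

Section FiveColours.
Hypothesis t5 : 5 <= t.
Local Notation L := (N :|: (M :\: M_N)).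

Lemma notin_MN_in_L f : f \in M -> f \notin M_N -> f \in L.
Proof. by move=> fM fMN; rewrite in_setU in_setD fMN fM orbT. Qed.

Lemma no_disjoint_edge g : col g \in Cs -> [disjoint vs g & vM L] -> False.
Proof.
move=> cg dg.
have dL h : h \in L -> [disjoint vs h & vs g].
  by move=> hL; rewrite disjoint_sym (disjointWr (vset_sub_vsetM hL) dg).
apply: (@no_augmentation [set g] set0).
- exact: rainbow_matching1.
- exact: sub0set.
- by rewrite cards0 cards1.
- apply: leq_ltn_trans (card_blockers (y1 := src g) (y2 := dst g) _) _.
    by move=> f _ _ /set1P-> /meets_endpoint.
  by rewrite imset_set1 cards1; lia.
- move=> f _ /setDP[/setDP[fM fMN] _] /set1P->.
  rewrite /compatible dL ?notin_MN_in_L //=.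
  by apply: contraNneq fMN => cf; apply: coloured_Cs_MN; rewrite ?cf.
- by move=> e _ eN /set1P-> _; apply: dL; rewrite inE eN.
Qed.

Lemma card_M_meeting_le1 e : e \in L -> #|[set f in M | meets f e]| <= 1.
Proof.
case: rmM => mM _ eL; apply/card_le1_eqP => f f' /setIdP[fM mfe] /setIdP[f'M mf'e].
case/setUP: eL => [eN|/setDP[eM _]].
  by apply: N_meets_unique eN f'M fM _ _; rewrite meetsC.
by rewrite (matching_meets mM fM eM mfe) (matching_meets mM f'M eM mf'e).
Qed.

Lemma no_rainbow_horn e e1 e2 : e \in L -> [disjoint vs e1 & vs e2] ->
  horn_edge src dst L e e1 -> horn_edge src dst L e e2 ->
  col e1 != col e2 -> col e1 \in Cs -> col e2 \in Cs -> False.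
Proof.
move=> eL d12 h1 h2 c12 c1 c2.
set A := [set e1; e2]; set D := [set f in M | meets f e].
have hornA a : a \in A -> horn_edge src dst L e a by case/set2P=> ->.
have CsA a : a \in A -> col a \in Cs by case/set2P=> ->.
have [[x1 [y1 [v1 [x1e _]]]] [x2 [y2 [v2 [x2e _]]]]] := (h1, h2).
have e12 : compatible e1 e2 by rewrite /compatible d12.
have far f : f \in M_N :\: D -> ~~ meets f e.
  case/setDP=> fMN; apply: contra => mfe; apply/setIdP; split=> //.
  exact: subsetP MN_subset f fMN.
apply: (@no_augmentation A D).
- exact: rainbow_matching2.
- by apply/subsetP => f /setIdP[].
- by rewrite cards2 (compatible_neq e12) ltnS card_M_meeting_le1.
- apply: leq_ltn_trans (card_blockers (y1 := y1) (y2 := y2) _) _.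
    move=> f a fMD /set2P[]-> mfa;
      [move: (horn_edge_meets v1 x1e mfa) | move: (horn_edge_meets v2 x2e mfa)];
      by rewrite (negbTE (far f fMD)) /= => ->; rewrite ?orbT.
  by have := leq_imset_card col A; rewrite cards2 (compatible_neq e12); lia.
- move=> f a /setDP[/setDP[fM fMN] fD] aA; rewrite /compatible; apply/andP; split.
    apply: contraNT fD => mfa; apply/setIdP; split=> //.
    exact: horn_meets (hornA a aA) (notin_MN_in_L fM fMN) mfa.
  by apply: contraNneq fMN => cf; apply: coloured_Cs_MN; rewrite ?cf ?CsA.
- move=> e' a e'N aA /hasP[f]; rewrite mem_enum => /setIdP[/far fe _] me'f.
  have [//|me'a] := boolP [disjoint vs e' & vs a]; exfalso.
  have e'L : e' \in L by rewrite in_setU e'N.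
  have me'e := horn_meets (hornA a aA) e'L me'a.
  case/setUP: eL => [eN|/setDP[eM eMN]].
    by rewrite -(matching_meets mN e'N eN me'e) meetsC me'f in fe.
  by case/negP: eMN; apply/setIdP; split=> //; apply/existsP; exists e'; rewrite e'N.
Qed.

End FiveColours.
End AuxiliaryMatching.
End ColouredGraph.

Theorem lemma2p6 (V C E : finType) (src dst : E -> V) (col : E -> C)
  (t : nat) (M N : {set E}) :
  loopless src dst ->
  5 <= t ->
  max_rainbow_matching src dst col M ->
  t_auxiliary src dst col t M N ->
  let Cs := unused col M :|: CN src dst col M N in
  let L := N :|: (M :\: MN src dst M N) in
  (~ exists e : E, col e \in Cs /\ [disjoint vset src dst e & vsetM src dst L]) /\
  (~ exists e : E, rainbow_horn src dst col Cs L e).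
Proof.
move=> _ t5 maxM auxN Cs L; rewrite {}/Cs {}/L; split.
  by case=> g [cg dg]; exact (no_disjoint_edge maxM auxN t5 cg dg).
case=> e [eL [e1 [e2 [d12 h1 h2 c12 /andP[c1 c2]]]]].
exact (no_rainbow_horn maxM auxN t5 eL d12 h1 h2 c12 c1 c2).
Qed.
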